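(* Let $n\in\mathbb{N}$, $\alpha,\beta>-1$, $\sigma:=\alpha+\beta+1$, and let $c_{ij}\equiv c_{ij}(n,\alpha,\beta)$ ($0\le i,j\le n$) be the B\'ezier coefficients of the dual Bernstein polynomials, i.e. $D^n_i(x;\alpha,\beta)=\sum_{j=0}^n c_{ij}B^n_j(x)$. Put \[ A(h):=(h-n)(h+\beta+1),\qquad B(h):=h(h-n-\alpha-1), \] and adopt the convention $c_{ij}:=0$ whenever $i$ or $j$ lies outside $\{0,\ldots,n\}$. Then for $0\le i\le n-1$ and $0\le j\le n$, \[ c_{i+1,j}=\frac{1}{A(i)}\Big\{(i-j)(2i+2j-2n-\alpha+\beta)\,c_{ij}+B(j)\,c_{i,j-1}+A(j)\,c_{i,j+1}-B(i)\,c_{i-1,j}\Big\}, \] and the first row is given by \[ c_{0j}=\frac{(\sigma+1)_n(\beta+2)_n}{n!\,B(\alpha+1,\beta+1)}\cdot\frac{(-1)^j}{(\alpha+1)_{n-j}(\beta+2)_j}\qquad(0\le j\le n). \]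
   Context: For $\alpha,\beta>-1$ define the inner product $\langle f,g\rangle:=\int_0^1(1-x)^{\alpha}x^{\beta}f(x)g(x)\,dx$. The Bernstein polynomials of degree $n$ are $B^n_i(x)=\binom ni x^i(1-x)^{n-i}$, $0\le i\le n$. The dual Bernstein polynomials $D^n_0(x;\alpha,\beta),\ldots,D^n_n(x;\alpha,\beta)$ are the unique polynomials of degree at most $n$ with $\langle D^n_i,B^n_j\rangle=\delta_{ij}$ for $i,j=0,\ldots,n$. Notation: $(c)_k:=\prod_{j=0}^{k-1}(c+j)$; $B(\lambda,\mu)=\Gamma(\lambda)\Gamma(\mu)/\Gamma(\lambda+\mu)$ (the beta function; not to be confused with the polynomial $B(h)$ defined in the claim). *)

From Stdlib Require Import Reals Lra ZArith.
Open Scope R_scope.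

Definition improper_int01 (f : R -> R) (l : R) : Prop :=
  forall eps : R, eps > 0 ->
  exists delta : R, delta > 0 /\
  forall a b : R, 0 < a < delta -> 1 - delta < b < 1 ->
    exists pr : Riemann_integrable f a b, Rabs (RiemannInt pr - l) < eps.

Definition jweight (alpha beta x : R) : R := Rpower (1 - x) alpha * Rpower x beta.

Definition bern (n i : nat) (x : R) : R := C n i * x ^ i * (1 - x) ^ (n - i).

Definition bezier (n : nat) (c : nat -> nat -> R) (i : nat) (x : R) : R :=
  sum_f_R0 (fun j => c i j * bern n j x) n.

Definition is_dual_coeffs (n : nat) (alpha beta : R) (c : nat -> nat -> R) : Prop :=
  forall i k : nat, (i <= n)%nat -> (k <= n)%nat ->
    improper_int01 (fun x => jweight alpha beta x * bezier n c i x * bern n k x)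
                   (if Nat.eqb i k then 1 else 0).

Definition cext (n : nat) (c : nat -> nat -> R) (i j : Z) : R :=
  if (Z.leb 0 i && Z.leb i (Z.of_nat n) && Z.leb 0 j && Z.leb j (Z.of_nat n))%bool
  then c (Z.to_nat i) (Z.to_nat j) else 0.

Fixpoint poch (c : R) (k : nat) : R :=
  match k with O => 1 | S k' => poch c k' * (c + INR k') end.

Definition Apol (n : nat) (beta h : R) : R := (h - INR n) * (h + beta + 1).
Definition Bpol (n : nat) (alpha h : R) : R := h * (h - INR n - alpha - 1).

From Stdlib Require Import Reals Lra Lia ZArith.
From Coquelicot Require Import Coquelicot.
Open Scope R_scope.

(* Write G for the Gram matrix G_jk = <B^n_j, B^n_k> of the Bernstein basis for the Jacobi
   weight w(x) = (1-x)^alpha x^beta.  Duality <D_i, B_k> = delta_ik says exactly c G = I.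
   1. Improper integrals over (0,1) are handled through [RInt]; integrating by parts on
      [a,b] and letting a -> 0, b -> 1 gives the moments
        J(m,l) = int w x^m (1-x)^l = B (beta+1)_m (alpha+1)_l / (alpha+beta+2)_(m+l),
      hence a closed form for G, which is symmetric.
   2. Since G is symmetric, c G = I also gives G c = I, so any row r with r G = e equals e c.
   3. First row: the claimed row v satisfies v G = e_0; this reduces to alternating binomial
      sums, which vanish on polynomials of low degree and are explicit on 1/(x+l).
   4. Recurrence: with L the three-term operator (L v)(i) = A(i) v(i+1) - f(i) v(i) +
      B(i) v(i-1), the claim is that L acting on the row index of c equals L acting on the
      column index.  The difference r satisfies r G = 0 because the transpose of L, applied
      to the columns of G, yields a symmetric matrix; hence r = 0.
   The theorem is assembled at the end, the out-of-range entries of [cext] being multiplied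
   by A(n) = 0 or B(0) = 0. *)

Definition near_ends (P : R -> R -> Prop) : Prop :=
  exists delta : R, delta > 0 /\
  forall a b : R, 0 < a < delta -> 1 - delta < b < 1 -> P a b.

Lemma near_ends_and (P Q : R -> R -> Prop) :
  near_ends P -> near_ends Q -> near_ends (fun a b => P a b /\ Q a b).
Proof.
  intros [d1 [Hd1 HP]] [d2 [Hd2 HQ]]. exists (Rmin d1 d2). split.
  - now apply Rmin_glb_lt.
  - pose proof (Rmin_l d1 d2). pose proof (Rmin_r d1 d2).
    intros a b Ha Hb. split; [apply HP | apply HQ]; lra.
Qed.

Lemma near_ends_mono (P Q : R -> R -> Prop) :
  (forall a b, P a b -> Q a b) -> near_ends P -> near_ends Q.
Proof. intros PQ [d [Hd HP]]. exists d. split; auto. Qed.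

Lemma near_ends_interior : near_ends (fun a b => 0 < a < 1 /\ 0 < b < 1).
Proof. exists (1/2). split; [lra|]. intros a b Ha Hb. lra. Qed.

Lemma near_ends_witness (P : R -> R -> Prop) : near_ends P -> exists a b, P a b.
Proof. intros [d [Hd HP]]. exists (d / 2), (1 - d / 2). apply HP; lra. Qed.

Definition improper_RInt (f : R -> R) (l : R) : Prop :=
  forall eps : R, eps > 0 ->
  near_ends (fun a b => ex_RInt f a b /\ Rabs (RInt f a b - l) < eps).

Lemma improper_RInt_of_int01 f l : improper_int01 f l -> improper_RInt f l.
Proof.
  intros H eps Heps. destruct (H eps Heps) as [d [Hd Hab]]. exists d. split; auto.
  intros a b Ha Hb. destruct (Hab a b Ha Hb) as [pr Hpr]. split.
  - exact (ex_RInt_Reals_1 f a b pr).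
  - rewrite (RInt_Reals f a b pr). exact Hpr.
Qed.

Lemma Rabs_scal_lt k x eps : eps > 0 -> Rabs x < eps / (Rabs k + 1) -> Rabs (k * x) < eps.
Proof.
  intros Heps Hx. pose proof (Rabs_pos k). pose proof (Rabs_pos x).
  rewrite Rabs_mult.
  apply Rle_lt_trans with ((Rabs k + 1) * Rabs x); [nra|].
  apply (Rmult_lt_compat_l (Rabs k + 1)) in Hx; [|lra].
  replace ((Rabs k + 1) * (eps / (Rabs k + 1))) with eps in Hx by (field; lra). exact Hx.
Qed.

Lemma improper_RInt_unique f l1 l2 : improper_RInt f l1 -> improper_RInt f l2 -> l1 = l2.
Proof.
  intros H1 H2. destruct (Req_dec l1 l2) as [E|Hne]; [exact E|exfalso].
  set (eps := Rabs (l1 - l2) / 2).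
  assert (Heps : eps > 0) by (unfold eps; pose proof (Rabs_pos_lt _ (Rminus_eq_contra _ _ Hne)); lra).
  destruct (near_ends_witness _ (near_ends_and _ _ (H1 eps Heps) (H2 eps Heps)))
    as (a & b & [_ A1] & [_ A2]).
  unfold eps in *. split_Rabs; lra.
Qed.

Lemma between_in01 a b x : 0 < a < 1 -> 0 < b < 1 -> Rmin a b <= x <= Rmax a b -> 0 < x < 1.
Proof. intros. unfold Rmin, Rmax in *. destruct Rle_dec; lra. Qed.

Lemma improper_RInt_ext f g l :
  (forall x, 0 < x < 1 -> f x = g x) -> improper_RInt f l -> improper_RInt g l.
Proof.
  intros E H eps Heps.
  refine (near_ends_mono _ _ _ (near_ends_and _ _ near_ends_interior (H eps Heps))).
  intros a b [[Ha Hb] [Hex Hlt]].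
  assert (Eab : forall x, Rmin a b < x < Rmax a b -> f x = g x).
  { intros x Hx. apply E, (between_in01 a b); auto; lra. }
  split.
  - exact (ex_RInt_ext f g a b Eab Hex).
  - now rewrite <- (RInt_ext f g a b Eab).
Qed.

Lemma improper_RInt_plus f g l1 l2 :
  improper_RInt f l1 -> improper_RInt g l2 -> improper_RInt (fun x => f x + g x) (l1 + l2).
Proof.
  intros H1 H2 eps Heps.
  refine (near_ends_mono _ _ _ (near_ends_and _ _ (H1 (eps / 2) ltac:(lra)) (H2 (eps / 2) ltac:(lra)))).
  intros a b [[E1 A1] [E2 A2]]. split.
  - exact (ex_RInt_plus f g a b E1 E2).
  - assert (Sum : RInt (fun x => f x + g x) a b = RInt f a b + RInt g a b)
      by exact (RInt_plus f g a b E1 E2).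
    rewrite Sum. split_Rabs; lra.
Qed.

Lemma improper_RInt_scal k f l :
  improper_RInt f l -> improper_RInt (fun x => k * f x) (k * l).
Proof.
  intros H eps Heps.
  assert (Htol : eps / (Rabs k + 1) > 0) by (pose proof (Rabs_pos k); apply Rdiv_lt_0_compat; lra).
  refine (near_ends_mono _ _ _ (H _ Htol)).
  intros a b [E A]. split.
  - exact (ex_RInt_scal f a b k E).
  - assert (Scal : RInt (fun x => k * f x) a b = k * RInt f a b) by exact (RInt_scal f a b k E).
    rewrite Scal, <- Rmult_minus_distr_l. now apply Rabs_scal_lt.
Qed.

Lemma improper_RInt_sum (F : nat -> R -> R) (L : nat -> R) N :
  (forall j, (j <= N)%nat -> improper_RInt (F j) (L j)) ->
  improper_RInt (fun x => sum_f_R0 (fun j => F j x) N) (sum_f_R0 L N).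
Proof.
  induction N as [|N IH]; intros H.
  - apply (improper_RInt_ext (F 0%nat)); auto.
  - apply improper_RInt_plus.
    + apply IH. intros j Hj. apply H. lia.
    + apply (improper_RInt_ext (F (S N))); auto.
Qed.

Lemma improper_RInt_reflect h l : improper_RInt h l -> improper_RInt (fun x => h (1 - x)) l.
Proof.
  intros H eps Heps. destruct (H eps Heps) as [d [Hd K]]. exists d. split; auto.
  intros a b Ha Hb. destruct (K (1 - b) (1 - a)) as [E A]; [lra|lra|].
  assert (E' : ex_RInt h (-1 * a + 1) (-1 * b + 1)).
  { replace (-1 * a + 1) with (1 - a) by ring. replace (-1 * b + 1) with (1 - b) by ring.
    now apply ex_RInt_swap. }
  assert (Ext : forall x, Rmin a b < x < Rmax a b -> opp (scal (-1) (h (-1 * x + 1))) = h (1 - x)).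
  { intros x _. change (- (-1 * h (-1 * x + 1)) = h (1 - x)).
    replace (-1 * x + 1) with (1 - x) by ring. ring. }
  pose proof (ex_RInt_comp_lin h (-1) 1 a b E') as Ecomp.
  split.
  - exact (ex_RInt_ext _ _ a b Ext (ex_RInt_opp _ a b Ecomp)).
  - assert (R1 : RInt (fun x => h (1 - x)) a b = RInt (fun x => opp (scal (-1) (h (-1 * x + 1)))) a b)
      by exact (eq_sym (RInt_ext _ _ a b Ext)).
    assert (R2 : RInt (fun x => opp (scal (-1) (h (-1 * x + 1)))) a b
                 = opp (RInt (fun y => scal (-1) (h (-1 * y + 1))) a b)) by exact (RInt_opp _ a b Ecomp).
    pose proof (RInt_comp_lin h (-1) 1 a b E') as R3.
    pose proof (opp_RInt_swap _ _ _ E') as R4.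
    replace (-1 * a + 1) with (1 - a) in R3, R4 by ring. replace (-1 * b + 1) with (1 - b) in R3, R4 by ring.
    rewrite (eq_trans R1 (eq_trans R2 (eq_trans (f_equal opp R3) R4))). exact A.
Qed.

Definition vanish_at_ends (F : R -> R) : Prop :=
  forall eps : R, eps > 0 -> near_ends (fun a b => Rabs (F a) < eps /\ Rabs (F b) < eps).

Lemma vanish_at_ends_scal k F : vanish_at_ends F -> vanish_at_ends (fun x => k * F x).
Proof.
  intros H eps Heps.
  assert (Htol : eps / (Rabs k + 1) > 0) by (pose proof (Rabs_pos k); apply Rdiv_lt_0_compat; lra).
  refine (near_ends_mono _ _ _ (H _ Htol)).
  intros a b [Ha Hb]. split; now apply Rabs_scal_lt.
Qed.

Lemma improper_RInt_limit f h F u S :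
  improper_RInt f S -> vanish_at_ends F ->
  (forall a b, 0 < a < 1 -> 0 < b < 1 ->
     ex_RInt h a b /\ RInt h a b = u * RInt f a b + (F b - F a)) ->
  improper_RInt h (u * S).
Proof.
  intros Hf HF Hh eps Heps.
  assert (Htol : eps / 2 / (Rabs u + 1) > 0) by (pose proof (Rabs_pos u); apply Rdiv_lt_0_compat; lra).
  refine (near_ends_mono _ _ _ (near_ends_and _ _ near_ends_interior
           (near_ends_and _ _ (Hf _ Htol) (HF (eps / 4) ltac:(lra))))).
  intros a b [[Ha Hb] [[_ Af] [Fa Fb]]].
  destruct (Hh a b Ha Hb) as [Eh Ih]. split; [exact Eh|].
  rewrite Ih.
  replace (u * RInt f a b + (F b - F a) - u * S) with (u * (RInt f a b - S) + (F b - F a)) by ring.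
  pose proof (Rabs_scal_lt u _ (eps / 2) ltac:(lra) Af). split_Rabs; lra.
Qed.

Lemma poch_pos c k : c > 0 -> poch c k > 0.
Proof. intros Hc. induction k as [|k IH]; simpl; [lra|]. pose proof (pos_INR k). nra. Qed.

Lemma poch_add c p q : poch c (p + q) = poch c p * poch (c + INR p) q.
Proof.
  induction q as [|q IH]; [rewrite Nat.add_0_r; simpl; ring|].
  rewrite Nat.add_succ_r. simpl. rewrite IH, plus_INR. ring.
Qed.

Lemma poch_succ_l c k : poch c (S k) = c * poch (c + 1) k.
Proof.
  change (S k) with (1 + k)%nat. rewrite poch_add. simpl.
  replace (c + (0 + 1)) with (c + 1) by ring. ring.
Qed.

Lemma poch_1 n : poch 1 n = INR (fact n).
Proof.
  induction n as [|n IH]; [reflexivity|].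
  simpl poch. rewrite IH, fact_simpl, mult_INR, S_INR. ring.
Qed.

Lemma Rpower_in01 z p : 0 < z < 1 -> p > 0 -> 0 < Rpower z p <= 1.
Proof.
  intros Hz Hp. unfold Rpower. split; [apply exp_pos|].
  assert (ln z < 0) by (rewrite <- ln_1; apply ln_increasing; lra).
  rewrite <- exp_0. left. apply exp_increasing. nra.
Qed.

Lemma Rpower_small p eps : p > 0 -> eps > 0 ->
  exists d, d > 0 /\ forall z, 0 < z < d -> Rpower z p < eps.
Proof.
  intros Hp Heps. exists (exp (ln eps / p)). split; [apply exp_pos|].
  intros z Hz. unfold Rpower. rewrite <- (exp_ln eps) by lra. apply exp_increasing.
  assert (Hlt : ln z < ln eps / p) by (rewrite <- (ln_exp (ln eps / p)); apply ln_increasing; lra).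
  apply (Rmult_lt_compat_l p) in Hlt; [|lra].
  replace (p * (ln eps / p)) with (ln eps) in Hlt by (field; lra). lra.
Qed.

Definition moment_integrand (a b : R) (m l : nat) (x : R) : R :=
  jweight a b x * x ^ m * (1 - x) ^ l.

Lemma moment_integrand_bound a b m l x : a > -1 -> b > -1 -> 0 < x < 1 ->
  0 <= moment_integrand a b (S m) (S l) x <= Rpower x (b + 1) /\
  moment_integrand a b (S m) (S l) x <= Rpower (1 - x) (a + 1).
Proof.
  intros Ha Hb Hx.
  assert (E : moment_integrand a b (S m) (S l) x =
              Rpower (1 - x) (a + 1) * Rpower x (b + 1) * (x ^ m * (1 - x) ^ l)).
  { unfold moment_integrand, jweight. rewrite !Rpower_plus, !Rpower_1 by lra. simpl pow. ring. }
  rewrite E.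
  destruct (Rpower_in01 (1 - x) (a + 1)) as [P1 Q1]; [lra|lra|].
  destruct (Rpower_in01 x (b + 1)) as [P2 Q2]; [lra|lra|].
  assert (0 <= x ^ m <= 1).
  { split; [apply pow_le; lra|]. rewrite <- (pow1 m). apply pow_incr. lra. }
  assert (0 <= (1 - x) ^ l <= 1).
  { split; [apply pow_le; lra|]. rewrite <- (pow1 l) at 2. apply pow_incr. lra. }
  assert (0 <= x ^ m * (1 - x) ^ l <= 1) by nra.
  set (w := x ^ m * (1 - x) ^ l) in *.
  assert (0 <= Rpower (1 - x) (a + 1) * w <= 1) by (split; nra).
  assert (0 <= Rpower x (b + 1) * w <= 1) by (split; nra).
  split; [split|]; nra.
Qed.

(* Hence it vanishes at both ends of (0,1): the boundary terms of integration by parts. *)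
Lemma moment_integrand_vanish a b m l : a > -1 -> b > -1 ->
  vanish_at_ends (moment_integrand a b (S m) (S l)).
Proof.
  intros Ha Hb eps Heps.
  destruct (Rpower_small (b + 1) eps) as [d0 [Hd0 K0]]; [lra|lra|].
  destruct (Rpower_small (a + 1) eps) as [d1 [Hd1 K1]]; [lra|lra|].
  assert (N0 : near_ends (fun u _ => Rpower u (b + 1) < eps)).
  { exists d0. split; [exact Hd0|]. intros u v Hu _. now apply K0. }
  assert (N1 : near_ends (fun _ v => Rpower (1 - v) (a + 1) < eps)).
  { exists d1. split; [exact Hd1|]. intros u v _ Hv. apply K1. lra. }
  refine (near_ends_mono _ _ _ (near_ends_and _ _ near_ends_interior (near_ends_and _ _ N0 N1))).
  intros u v [[Hu Hv] [Su Sv]].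
  destruct (moment_integrand_bound a b m l u) as [[B1 B2] _]; auto.
  destruct (moment_integrand_bound a b m l v) as [[B3 _] B4]; auto.
  rewrite !Rabs_right by lra. lra.
Qed.

Lemma moment_integrand_derive a b m l x : 0 < x < 1 ->
  is_derive (moment_integrand a b (S m) (S l)) x
    ((b + INR m + 1) * moment_integrand a b m (S l) x
     - (a + INR l + 1) * moment_integrand a b (S m) l x).
Proof.
  intros Hx. unfold moment_integrand, jweight, Rpower. auto_derive; [lra|].
  change (match m with 0%nat => 1 | S _ => INR m + 1 end) with (INR (S m)).
  change (match l with 0%nat => 1 | S _ => INR l + 1 end) with (INR (S l)).
  rewrite !S_INR. replace (1 + - x) with (1 - x) by ring. simpl pow. field. lra.
Qed.

Lemma moment_integrand_continuous a b m l x : 0 < x < 1 ->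
  continuous (moment_integrand a b m l) x.
Proof.
  intros Hx. apply (@ex_derive_continuous R_AbsRing R_NormedModule).
  unfold moment_integrand, jweight, Rpower. auto_derive. lra.
Qed.

Lemma moment_integrand_ex_RInt a b m l u v : 0 < u < 1 -> 0 < v < 1 ->
  ex_RInt (moment_integrand a b m l) u v.
Proof.
  intros Hu Hv. apply (@ex_RInt_continuous R_CompleteNormedModule).
  intros z Hz. apply moment_integrand_continuous, (between_in01 u v); auto.
Qed.

Lemma moment_by_parts a b m l u v : 0 < u < 1 -> 0 < v < 1 ->
  (b + INR m + 1) * RInt (moment_integrand a b m (S l)) u v
  - (a + INR l + 1) * RInt (moment_integrand a b (S m) l) u v
  = moment_integrand a b (S m) (S l) v - moment_integrand a b (S m) (S l) u.
Proof.
  intros Hu Hv.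
  pose proof (moment_integrand_ex_RInt a b m (S l) u v Hu Hv) as E1.
  pose proof (moment_integrand_ex_RInt a b (S m) l u v Hu Hv) as E2.
  assert (Lin : RInt (fun x => (b + INR m + 1) * moment_integrand a b m (S l) x
                              - (a + INR l + 1) * moment_integrand a b (S m) l x) u v
              = (b + INR m + 1) * RInt (moment_integrand a b m (S l)) u v
                - (a + INR l + 1) * RInt (moment_integrand a b (S m) l) u v).
  { assert (S1 : RInt (fun x => (b + INR m + 1) * moment_integrand a b m (S l) x) u v
                 = (b + INR m + 1) * RInt (moment_integrand a b m (S l)) u v)
      by exact (RInt_scal _ u v _ E1).
    assert (S2 : RInt (fun x => (a + INR l + 1) * moment_integrand a b (S m) l x) u v
                 = (a + INR l + 1) * RInt (moment_integrand a b (S m) l) u v)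
      by exact (RInt_scal _ u v _ E2).
    rewrite <- S1, <- S2.
    exact (RInt_minus _ _ u v (ex_RInt_scal _ u v _ E1) (ex_RInt_scal _ u v _ E2)). }
  rewrite <- Lin. apply is_RInt_unique, (is_RInt_derive (moment_integrand a b (S m) (S l))).
  - intros x Hx. apply moment_integrand_derive, (between_in01 u v); auto.
  - intros x Hx. assert (0 < x < 1) by (apply (between_in01 u v); auto).
    apply (@ex_derive_continuous R_AbsRing R_NormedModule).
    unfold moment_integrand, jweight, Rpower. auto_derive. lra.
Qed.

Lemma moment_split a b m l u v : 0 < u < 1 -> 0 < v < 1 ->
  RInt (moment_integrand a b m l) u v
  = RInt (moment_integrand a b (S m) l) u v + RInt (moment_integrand a b m (S l)) u v.
Proof.
  intros Hu Hv.
  rewrite (RInt_ext (moment_integrand a b m l)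
             (fun x => moment_integrand a b (S m) l x + moment_integrand a b m (S l) x)).
  - exact (RInt_plus _ _ u v (moment_integrand_ex_RInt a b (S m) l u v Hu Hv)
                             (moment_integrand_ex_RInt a b m (S l) u v Hu Hv)).
  - intros x _.
    change (moment_integrand a b m l x = moment_integrand a b (S m) l x + moment_integrand a b m (S l) x).
    unfold moment_integrand. simpl pow. ring.
Qed.

Lemma moment_by_parts_solved a b m l u w : a > -1 -> b > -1 -> 0 < u < 1 -> 0 < w < 1 ->
  let v := a + b + INR m + INR l + 2 in
  let g := moment_integrand a b (S m) (S l) in
  RInt (moment_integrand a b (S m) l) u w
    = (b + INR m + 1) / v * RInt (moment_integrand a b m l) u w + (- / v * g w - - / v * g u) /\
  RInt (moment_integrand a b m (S l)) u w
    = (a + INR l + 1) / v * RInt (moment_integrand a b m l) u w + (/ v * g w - / v * g u).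
Proof.
  intros Ha Hb Hu Hw v g.
  assert (Hv : v > 0) by (unfold v; pose proof (pos_INR m); pose proof (pos_INR l); lra).
  pose proof (moment_by_parts a b m l u w Hu Hw) as Parts.
  rewrite (moment_split a b m l u w Hu Hw).
  set (P := RInt (moment_integrand a b (S m) l) u w) in *.
  set (Q := RInt (moment_integrand a b m (S l)) u w) in *.
  assert (Gw : g w = g u + ((b + INR m + 1) * Q - (a + INR l + 1) * P)) by (unfold g; lra).
  assert (Id : forall P Q G : R,
    let D := (b + INR m + 1) * Q - (a + INR l + 1) * P in
    P = (b + INR m + 1) / v * (P + Q) + (- / v * (G + D) - - / v * G) /\
    Q = (a + INR l + 1) / v * (P + Q) + (/ v * (G + D) - / v * G))
    by (intros P0 Q0 G D; subst D; unfold v; split; field; fold v; lra).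
  rewrite Gw. exact (Id P Q _).
Qed.

Lemma moment_step_left a b m l S0 : a > -1 -> b > -1 ->
  improper_RInt (moment_integrand a b m l) S0 ->
  improper_RInt (moment_integrand a b (S m) l) ((b + INR m + 1) / (a + b + INR m + INR l + 2) * S0).
Proof.
  intros Ha Hb H.
  apply (improper_RInt_limit _ _
           (fun x => - / (a + b + INR m + INR l + 2) * moment_integrand a b (S m) (S l) x) _ _ H).
  - apply vanish_at_ends_scal, moment_integrand_vanish; auto.
  - intros u w Hu Hw. split; [now apply moment_integrand_ex_RInt|].
    exact (proj1 (moment_by_parts_solved a b m l u w Ha Hb Hu Hw)).
Qed.

Lemma moment_step_right a b m l S0 : a > -1 -> b > -1 ->
  improper_RInt (moment_integrand a b m l) S0 ->
  improper_RInt (moment_integrand a b m (S l)) ((a + INR l + 1) / (a + b + INR m + INR l + 2) * S0).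
Proof.
  intros Ha Hb H.
  apply (improper_RInt_limit _ _
           (fun x => / (a + b + INR m + INR l + 2) * moment_integrand a b (S m) (S l) x) _ _ H).
  - apply vanish_at_ends_scal, moment_integrand_vanish; auto.
  - intros u w Hu Hw. split; [now apply moment_integrand_ex_RInt|].
    exact (proj2 (moment_by_parts_solved a b m l u w Ha Hb Hu Hw)).
Qed.

Definition beta_moment (a b B : R) (m l : nat) : R :=
  B * poch (b + 1) m * poch (a + 1) l / poch (a + b + 2) (m + l).

Lemma beta_moment_improper a b B : a > -1 -> b > -1 ->
  improper_RInt (moment_integrand a b 0 0) B ->
  forall m l, improper_RInt (moment_integrand a b m l) (beta_moment a b B m l).
Proof.
  intros Ha Hb H0 m l.
  assert (Hm : forall m, 0 < poch (a + b + 2) m) by (intros; apply poch_pos; lra).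
  induction l as [|l IHl].
  - induction m as [|m IHm].
    + replace (beta_moment a b B 0 0) with B by (unfold beta_moment; simpl poch; field). exact H0.
    + replace (beta_moment a b B (S m) 0)
        with ((b + INR m + 1) / (a + b + INR m + INR 0 + 2) * beta_moment a b B m 0).
      * apply moment_step_left; auto.
      * unfold beta_moment. rewrite !Nat.add_0_r. simpl poch.
        pose proof (Hm m). pose proof (pos_INR m). rewrite INR_0. field. lra.
  - replace (beta_moment a b B m (S l))
      with ((a + INR l + 1) / (a + b + INR m + INR l + 2) * beta_moment a b B m l).
    + apply moment_step_right; auto.
    + unfold beta_moment. rewrite Nat.add_succ_r. simpl poch. rewrite plus_INR.
      pose proof (Hm (m + l)%nat). pose proof (pos_INR m). pose proof (pos_INR l). field. lra.
Qed.

(* The hypothesis on betaAB, read through x |-> 1 - x, is the zeroth moment. *)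
Lemma beta_zeroth_moment a b B :
  improper_int01 (fun t => Rpower t a * Rpower (1 - t) b) B ->
  improper_RInt (moment_integrand a b 0 0) B.
Proof.
  intros H. apply improper_RInt_of_int01, improper_RInt_reflect in H. revert H.
  apply improper_RInt_ext. intros x Hx. unfold moment_integrand, jweight. simpl.
  replace (1 - (1 - x)) with x by ring. ring.
Qed.

Definition kron (i k : nat) : R := if Nat.eqb i k then 1 else 0.

Lemma kron_sym i k : kron i k = kron k i.
Proof. unfold kron. now rewrite Nat.eqb_sym. Qed.

Lemma kron_eq i k : i = k -> kron i k = 1.
Proof. intros <-. unfold kron. now rewrite Nat.eqb_refl. Qed.

Lemma kron_neq i k : i <> k -> kron i k = 0.
Proof. intros H. unfold kron. now destruct (Nat.eqb_spec i k). Qed.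

Lemma sum_kron (F : nat -> R) n k : (k <= n)%nat -> sum_f_R0 (fun j => F j * kron j k) n = F k.
Proof.
  intros Hk. induction n as [|n IH]; cbn [sum_f_R0].
  - replace k with 0%nat by lia. rewrite kron_eq by reflexivity. ring.
  - destruct (Nat.eq_dec k (S n)) as [->|Ne].
    + rewrite sum_eq_R0, kron_eq by (reflexivity || (intros; rewrite kron_neq by lia; ring)). ring.
    + rewrite IH, kron_neq by lia. ring.
Qed.

Lemma sum_swap (F : nat -> nat -> R) n m :
  sum_f_R0 (fun i => sum_f_R0 (fun j => F i j) m) n
  = sum_f_R0 (fun j => sum_f_R0 (fun i => F i j) n) m.
Proof. induction n as [|n IH]; simpl; [reflexivity|]. now rewrite IH, <- plus_sum. Qed.

Definition left_inverse (n : nat) (c G : nat -> nat -> R) : Prop :=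
  forall i k, (i <= n)%nat -> (k <= n)%nat -> sum_f_R0 (fun j => c i j * G j k) n = kron i k.

Definition symmetric (G : nat -> nat -> R) : Prop := forall j k, G j k = G k j.

Section InverseOfSymmetric.
Variables (n : nat) (c G : nat -> nat -> R).
Hypotheses (HcG : left_inverse n c G) (HG : symmetric G).

(* A left inverse of a symmetric matrix is symmetric: c = c (G c^T) = (c G) c^T = c^T. *)
Lemma left_inverse_symmetric i k : (i <= n)%nat -> (k <= n)%nat -> c i k = c k i.
Proof.
  intros Hi Hk.
  transitivity (sum_f_R0 (fun m => sum_f_R0 (fun j => c i m * G m j * c k j) n) n).
  { rewrite <- (sum_kron (c i) n k Hk). apply sum_eq. intros m Hm.
    rewrite kron_sym, <- (HcG k m) by auto. rewrite scal_sum.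
    apply sum_eq. intros j Hj. rewrite (HG j m). ring. }
  rewrite sum_swap, <- (sum_kron (c k) n i Hi). apply sum_eq. intros j Hj.
  rewrite <- (scal_sum (fun m => c i m * G m j) n (c k j)), HcG, kron_sym by auto. ring.
Qed.

Lemma right_inverse i k : (i <= n)%nat -> (k <= n)%nat ->
  sum_f_R0 (fun j => G i j * c j k) n = kron i k.
Proof.
  intros Hi Hk. rewrite kron_sym, <- (HcG k i) by auto.
  apply sum_eq. intros j Hj. rewrite (left_inverse_symmetric j k), (HG i j) by auto. ring.
Qed.

Lemma solve_row (r e : nat -> R) :
  (forall k, (k <= n)%nat -> sum_f_R0 (fun l => r l * G l k) n = e k) ->
  forall m, (m <= n)%nat -> r m = sum_f_R0 (fun k => e k * c k m) n.
Proof.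
  intros Hr m Hm.
  transitivity (sum_f_R0 (fun l => sum_f_R0 (fun k => r l * G l k * c k m) n) n).
  { rewrite <- (sum_kron r n m Hm). apply sum_eq. intros l Hl.
    rewrite <- (right_inverse l m), scal_sum by auto. apply sum_eq. intros k Hk. ring. }
  rewrite sum_swap. apply sum_eq. intros k Hk.
  now rewrite <- (scal_sum (fun l => r l * G l k) n (c k m)), Hr, Rmult_comm.
Qed.
End InverseOfSymmetric.

(* (b+1)_s (a+1)_(2n-s): the part of the moment J(s, 2n-s) that depends on s. *)
Definition gram_factor (a b : R) (n s : nat) : R := poch (b + 1) s * poch (a + 1) (2 * n - s).

(* The Gram matrix <B^n_j, B^n_k> = C(n,j) C(n,k) J(j+k, 2n-j-k). *)
Definition bernstein_gram (a b B : R) (n j k : nat) : R :=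
  B / poch (a + b + 2) (2 * n) * Binomial.C n j * Binomial.C n k * gram_factor a b n (j + k).

Lemma bernstein_gram_symmetric a b B n : symmetric (bernstein_gram a b B n).
Proof. intros j k. unfold bernstein_gram. rewrite Nat.add_comm. ring. Qed.

Lemma dual_coeffs_left_inverse n a b c B : a > -1 -> b > -1 ->
  is_dual_coeffs n a b c -> improper_RInt (moment_integrand a b 0 0) B ->
  left_inverse n c (bernstein_gram a b B n).
Proof.
  intros Ha Hb Hdual H0 i k Hi Hk.
  pose proof (improper_RInt_of_int01 _ _ (Hdual i k Hi Hk)) as Hik.
  (* Expanding D_i in the Bernstein basis, the integrand is a combination of moment integrands. *)
  set (F := fun j => c i j * Binomial.C n j * Binomial.C n k).
  assert (Hprod : improper_RInt (fun x => jweight a b x * bezier n c i x * bern n k x)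
     (sum_f_R0 (fun j => F j * beta_moment a b B (j + k) ((n - j) + (n - k))) n)).
  { apply (improper_RInt_ext
             (fun x => sum_f_R0 (fun j => F j * moment_integrand a b (j + k) ((n - j) + (n - k)) x) n)).
    - intros x Hx. unfold bezier.
      rewrite Rmult_comm, <- Rmult_assoc, (Rmult_comm (bern n k x)), scal_sum.
      apply sum_eq. intros j Hj. unfold F, moment_integrand, bern. rewrite !pow_add. ring.
    - apply improper_RInt_sum. intros j Hj. apply improper_RInt_scal, beta_moment_improper; auto. }
  unfold kron. rewrite <- (improper_RInt_unique _ _ _ Hprod Hik). apply sum_eq. intros j Hj.
  unfold F, bernstein_gram, beta_moment, gram_factor.
  replace (j + k + (n - j + (n - k)))%nat with (2 * n)%nat by lia.
  replace (n - j + (n - k))%nat with (2 * n - (j + k))%nat by lia.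
  assert (poch (a + b + 2) (2 * n) > 0) by (apply poch_pos; lra).
  field. lra.
Qed.

(* The scale B of the Gram matrix cannot vanish: c G = I is impossible for G = 0. *)
Lemma left_inverse_gram_scale n a b c B : left_inverse n c (bernstein_gram a b B n) -> B <> 0.
Proof.
  intros HcG ->. specialize (HcG 0%nat 0%nat (Nat.le_0_l n) (Nat.le_0_l n)).
  rewrite sum_eq_R0, kron_eq in HcG by (reflexivity || (intros; unfold bernstein_gram, Rdiv; ring)).
  lra.
Qed.

(* [low_degree d q]: the d-th forward difference of q : nat -> R vanishes identically,
   i.e. q is a polynomial in its index of degree < d. *)
Fixpoint low_degree (d : nat) (q : nat -> R) : Prop :=
  match d with
  | O => forall j, q j = 0
  | S d' => low_degree d' (fun j => q (S j) - q j)
  end.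

Lemma low_degree_ext d : forall p q, (forall j, p j = q j) -> low_degree d p -> low_degree d q.
Proof.
  induction d as [|d IH]; simpl; intros p q E H.
  - intros j. now rewrite <- E.
  - apply (IH (fun j => p (S j) - p j)); [intros j; now rewrite !E | exact H].
Qed.

Lemma low_degree_plus d : forall p q,
  low_degree d p -> low_degree d q -> low_degree d (fun j => p j + q j).
Proof.
  induction d as [|d IH]; simpl; intros p q Hp Hq.
  - intros j. rewrite Hp, Hq. ring.
  - apply (low_degree_ext _ (fun j => (p (S j) - p j) + (q (S j) - q j))); [intros; ring|].
    now apply IH.
Qed.

Lemma low_degree_scal d : forall r p, low_degree d p -> low_degree d (fun j => r * p j).
Proof.
  induction d as [|d IH]; simpl; intros r p Hp.
  - intros j. rewrite Hp. ring.
  - apply (low_degree_ext _ (fun j => r * (p (S j) - p j))); [intros; ring|]. now apply IH.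
Qed.

Lemma low_degree_succ d : forall p, low_degree d p -> low_degree (S d) p.
Proof.
  induction d as [|d IH]; intros p Hp.
  - simpl in *. intros j. rewrite !Hp. ring.
  - exact (IH _ Hp).
Qed.

Lemma low_degree_le d d' p : (d <= d')%nat -> low_degree d p -> low_degree d' p.
Proof. intros H. induction H; auto using low_degree_succ. Qed.

Lemma low_degree_const r : low_degree 1 (fun _ => r).
Proof. simpl. intros; ring. Qed.

Lemma low_degree_mul_linear d : forall e f q,
  low_degree d q -> low_degree (S d) (fun j => (e + f * INR j) * q j).
Proof.
  induction d as [|d IH]; intros e f q Hq.
  - simpl in *. intros j. rewrite !Hq. ring.
  - change (low_degree (S d) (fun j => (e + f * INR (S j)) * q (S j) - (e + f * INR j) * q j)).
    apply (low_degree_ext _ (fun j => ((e + f) + f * INR j) * (q (S j) - q j) + f * q j)).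
    { intros j. rewrite S_INR. ring. }
    apply low_degree_plus; [exact (IH (e + f) f _ Hq) | now apply low_degree_scal].
Qed.

Lemma low_degree_mul_poch d e f m q :
  low_degree d q -> low_degree (d + m) (fun j => q j * poch (e + f * INR j) m).
Proof.
  intros Hq. induction m as [|m IH].
  - rewrite Nat.add_0_r. apply (low_degree_ext _ q); auto. intros; simpl; ring.
  - rewrite Nat.add_succ_r.
    apply (low_degree_ext _ (fun j => ((e + INR m) + f * INR j) * (q j * poch (e + f * INR j) m))).
    { intros j. simpl. ring. }
    now apply low_degree_mul_linear.
Qed.

(* Binomial coefficient extended by zero above n, so that Pascal's rule holds for all l. *)
Definition binom (n l : nat) : R := if Nat.leb l n then Binomial.C n l else 0.

Lemma C_0 n : Binomial.C n 0 = 1.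
Proof.
  unfold Binomial.C. rewrite Nat.sub_0_r. change (INR (fact 0)) with 1.
  field. apply INR_fact_neq_0.
Qed.

Lemma binom_0 n : binom n 0 = 1.
Proof. apply C_0. Qed.

Lemma C_diag n : Binomial.C n n = 1.
Proof.
  unfold Binomial.C. rewrite Nat.sub_diag. change (INR (fact 0)) with 1.
  field. apply INR_fact_neq_0.
Qed.

Lemma binom_pascal n l : binom (S n) (S l) = binom n l + binom n (S l).
Proof.
  unfold binom.
  destruct (Nat.leb_spec (S l) (S n)), (Nat.leb_spec l n), (Nat.leb_spec (S l) n); try lia.
  - rewrite <- pascal by lia. ring.
  - replace l with n by lia. rewrite !C_diag. ring.
  - ring.
Qed.

Lemma sum_f_R0_shift (g : nat -> R) n :
  sum_f_R0 g n + g (S n) = g 0%nat + sum_f_R0 (fun l => g (S l)) n.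
Proof. exact (decomp_sum g (S n) (Nat.lt_0_succ n)). Qed.

Lemma alt_binom_sum_ext n (q : nat -> R) :
  sum_f_R0 (fun l => (-1) ^ l * Binomial.C n l * q l) n = sum_f_R0 (fun l => (-1) ^ l * binom n l * q l) n.
Proof. apply sum_eq. intros l Hl. unfold binom. now destruct (Nat.leb_spec l n); [|lia]. Qed.

Lemma alt_binom_sum_succ n (q : nat -> R) :
  sum_f_R0 (fun l => (-1) ^ l * Binomial.C (S n) l * q l) (S n) =
  - sum_f_R0 (fun l => (-1) ^ l * Binomial.C n l * (q (S l) - q l)) n.
Proof.
  rewrite !alt_binom_sum_ext.
  set (h := fun l => (-1) ^ l * binom n l * q l).
  set (X := fun l => (-1) ^ l * binom n l * q (S l)).
  assert (Hlast : h (S n) = 0) by (unfold h, binom; destruct (Nat.leb_spec (S n) n); [lia|ring]).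
  assert (Hsucc : sum_f_R0 (fun l => (-1) ^ l * binom (S n) l * q l) (S n)
                  = h 0%nat + (sum_f_R0 (fun l => h (S l)) n - sum_f_R0 X n)).
  { rewrite (decomp_sum _ (S n)), <- minus_sum by lia. unfold h. rewrite !binom_0. f_equal.
    apply sum_eq. intros l _. unfold X. rewrite binom_pascal.
    change ((-1) ^ S l) with (-1 * (-1) ^ l). ring. }
  assert (Hdiff : sum_f_R0 (fun l => (-1) ^ l * binom n l * (q (S l) - q l)) n
                  = sum_f_R0 X n - sum_f_R0 h n).
  { rewrite <- minus_sum. apply sum_eq. intros l _. unfold X, h. ring. }
  pose proof (sum_f_R0_shift h n) as Shift.
  rewrite Hsucc, Hdiff.
  lra.
Qed.

Lemma alt_binom_sum_low_degree n : forall q, low_degree n q ->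
  sum_f_R0 (fun l => (-1) ^ l * Binomial.C n l * q l) n = 0.
Proof.
  induction n as [|n IH]; intros q Hq.
  - simpl in *. rewrite Hq. ring.
  - rewrite alt_binom_sum_succ, IH; [ring | exact Hq].
Qed.

Lemma inv_poch_diff A m : A > 0 -> / poch (A + 1) m - / poch A m = - INR m * / poch A (S m).
Proof.
  intros HA.
  assert (E1 : poch A (S m) = A * poch (A + 1) m) by apply poch_succ_l.
  assert (E2 : poch A (S m) = poch A m * (A + INR m)) by reflexivity.
  pose proof (poch_pos A m HA). pose proof (poch_pos (A + 1) m ltac:(lra)).
  pose proof (poch_pos A (S m) HA).
  replace (/ poch (A + 1) m) with (A * / poch A (S m)) by (rewrite E1; field; split; lra).
  replace (/ poch A m) with ((A + INR m) * / poch A (S m))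
    by (rewrite E2; pose proof (pos_INR m); field; split; lra).
  ring.
Qed.

Lemma alt_binom_sum_inv_poch x : x > 0 -> forall n m,
  sum_f_R0 (fun l => (-1) ^ l * Binomial.C n l * / poch (x + INR l) m) n
  = poch (INR m) n / poch x (m + n).
Proof.
  intros Hx. induction n as [|n IH]; intros m.
  - simpl. rewrite C_0, Nat.add_0_r, Rplus_0_r.
    pose proof (poch_pos x m Hx). field. lra.
  - rewrite alt_binom_sum_succ.
    rewrite (sum_eq _ (fun l => (-1) ^ l * Binomial.C n l * / poch (x + INR l) (S m) * (- INR m))).
    + rewrite <- scal_sum, IH, poch_succ_l, Nat.add_succ_r, S_INR. change (S m + n)%nat with (S (m + n)).
      unfold Rdiv. ring.
    + intros l _. pose proof (pos_INR l).
      rewrite S_INR, <- Rplus_assoc, inv_poch_diff by lra. ring.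
Qed.

Lemma poch_shift_decomp (b0 y : R) (m : nat) : exists r : nat -> R, low_degree m r /\
  forall l, poch (b0 - (y + INR l)) m = poch b0 m + (y + INR l) * r l.
Proof.
  induction m as [|m [r [Hr Hdecomp]]].
  - exists (fun _ => 0). split; [simpl; auto|]. intros; simpl; ring.
  - exists (fun l => ((b0 + INR m - y) + (-1) * INR l) * r l + (-1) * poch b0 m). split.
    + apply low_degree_plus.
      * now apply low_degree_mul_linear.
      * apply low_degree_scal, (low_degree_le 1); [lia | apply low_degree_const].
    + intros l. simpl poch. rewrite Hdecomp. ring.
Qed.

Definition first_row (a b B : R) (n l : nat) : R :=
  poch (a + b + 1 + 1) n * poch (b + 2) n / (INR (fact n) * B) *
  ((-1) ^ l / (poch (a + 1) (n - l) * poch (b + 2) l)).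

(* For k >= 1 the l-dependent part of the first row times the Gram matrix is a polynomial
   in l of degree < n. *)
Lemma gram_ratio_pos a b n l k : a > -1 -> b > -1 -> (l <= n)%nat -> (S k <= n)%nat ->
  gram_factor a b n (l + S k) / (poch (a + 1) (n - l) * poch (b + 2) l) =
  (b + 1) * poch (b + 2 + 1 * INR l) k * poch ((a + 1 + INR n) + (-1) * INR l) (n - S k).
Proof.
  intros Ha Hb Hl Hk. unfold gram_factor.
  replace (l + S k)%nat with (S l + k)%nat by lia.
  replace (2 * n - (S l + k))%nat with ((n - l) + (n - S k))%nat by lia.
  rewrite !poch_add, poch_succ_l, minus_INR, S_INR by lia.
  replace (b + 1 + (INR l + 1)) with (b + 2 + 1 * INR l) by ring.
  replace (b + 1 + 1) with (b + 2) by ring.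
  replace (a + 1 + (INR n - INR l)) with (a + 1 + INR n + -1 * INR l) by ring.
  pose proof (poch_pos (a + 1) (n - l) ltac:(lra)). pose proof (poch_pos (b + 2) l ltac:(lra)).
  field. lra.
Qed.

Lemma gram_ratio_zero a b n l : a > -1 -> b > -1 -> (l <= n)%nat ->
  gram_factor a b n (l + 0) / (poch (a + 1) (n - l) * poch (b + 2) l) =
  (b + 1) / (b + 1 + INR l) * poch ((a + b + 2 + INR n) - ((b + 1) + INR l)) n.
Proof.
  intros Ha Hb Hl. unfold gram_factor. rewrite Nat.add_0_r.
  replace (2 * n - l)%nat with ((n - l) + n)%nat by lia.
  rewrite poch_add, minus_INR by lia.
  replace (a + 1 + (INR n - INR l)) with ((a + b + 2 + INR n) - ((b + 1) + INR l)) by ring.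
  assert (E1 : poch (b + 1) (S l) = (b + 1) * poch (b + 2) l).
  { rewrite poch_succ_l. now replace (b + 1 + 1) with (b + 2) by ring. }
  assert (E2 : poch (b + 1) (S l) = poch (b + 1) l * (b + 1 + INR l)) by reflexivity.
  pose proof (poch_pos (a + 1) (n - l) ltac:(lra)). pose proof (poch_pos (b + 2) l ltac:(lra)).
  pose proof (poch_pos (b + 1) l ltac:(lra)). pose proof (pos_INR l).
  assert (E3 : poch (b + 1) l = (b + 1) * poch (b + 2) l / (b + 1 + INR l)).
  { apply (Rmult_eq_reg_r (b + 1 + INR l)); [|lra]. rewrite <- E2, E1. field. lra. }
  rewrite E3. field. lra.
Qed.

Lemma first_row_gram_sum a b n k : a > -1 -> b > -1 -> (k <= n)%nat ->
  sum_f_R0 (fun l => (-1) ^ l * Binomial.C n l *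
                     (gram_factor a b n (l + k) / (poch (a + 1) (n - l) * poch (b + 2) l))) n
  = if Nat.eqb k 0 then INR (fact n) * poch (a + b + 2 + INR n) n / poch (b + 2) n else 0.
Proof.
  intros Ha Hb Hk. destruct k as [|k]; simpl Nat.eqb; cbv iota.
  - destruct (poch_shift_decomp (a + b + 2 + INR n) (b + 1) n) as [r [Hr Hdecomp]].
    rewrite (sum_eq _ (fun l => (-1) ^ l * Binomial.C n l * / poch (b + 1 + INR l) 1
                                  * ((b + 1) * poch (a + b + 2 + INR n) n)
                              + (-1) ^ l * Binomial.C n l * r l * (b + 1))).
    + rewrite plus_sum, <- !scal_sum, alt_binom_sum_inv_poch by lra.
      rewrite alt_binom_sum_low_degree, poch_1 by exact Hr. simpl (1 + n)%nat.
      rewrite (poch_succ_l (b + 1) n).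
      replace (b + 1 + 1) with (b + 2) by ring.
      pose proof (poch_pos (b + 2) n ltac:(lra)). field. lra.
    + intros l Hl. rewrite gram_ratio_zero, Hdecomp by auto. simpl poch.
      pose proof (pos_INR l). field. lra.
  - rewrite (sum_eq _ (fun l => (-1) ^ l * Binomial.C n l *
       ((b + 1) * poch (b + 2 + 1 * INR l) k * poch ((a + 1 + INR n) + (-1) * INR l) (n - S k))))
      by (intros; now rewrite gram_ratio_pos).
    apply alt_binom_sum_low_degree, (low_degree_le (1 + k + (n - S k))); [lia|].
    do 2 apply low_degree_mul_poch. apply low_degree_const.
Qed.

Lemma first_row_gram n a b B k : a > -1 -> b > -1 -> B <> 0 -> (k <= n)%nat ->
  sum_f_R0 (fun l => first_row a b B n l * bernstein_gram a b B n l k) n = kron 0 k.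
Proof.
  intros Ha Hb HB Hk.
  set (K := poch (a + b + 2) n * poch (b + 2) n / (INR (fact n) * B)
            * (B / poch (a + b + 2) (2 * n)) * Binomial.C n k).
  pose proof (poch_pos (a + b + 2) (2 * n) ltac:(lra)).
  pose proof (poch_pos (b + 2) n ltac:(lra)). pose proof (INR_fact_neq_0 n).
  rewrite (sum_eq _ (fun l => (-1) ^ l * Binomial.C n l *
             (gram_factor a b n (l + k) / (poch (a + 1) (n - l) * poch (b + 2) l)) * K)).
  2: { intros l Hl. unfold first_row, bernstein_gram, K. replace (a + b + 1 + 1) with (a + b + 2) by ring.
       pose proof (poch_pos (a + 1) (n - l) ltac:(lra)). pose proof (poch_pos (b + 2) l ltac:(lra)).
       field. repeat split; lra. }
  rewrite <- scal_sum, first_row_gram_sum by auto. unfold K, kron.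
  destruct k as [|k]; simpl Nat.eqb; cbv iota; [|ring].
  rewrite C_0. replace (2 * n)%nat with (n + n)%nat by lia. rewrite poch_add.
  pose proof (poch_pos (a + b + 2) n ltac:(lra)).
  pose proof (poch_pos (a + b + 2 + INR n) n ltac:(pose proof (pos_INR n); lra)).
  field. repeat split; lra.
Qed.

Lemma first_row_correct n a b c B : a > -1 -> b > -1 -> B <> 0 ->
  left_inverse n c (bernstein_gram a b B n) ->
  forall j, (j <= n)%nat -> c 0%nat j = first_row a b B n j.
Proof.
  intros Ha Hb HB HcG j Hj.
  rewrite (solve_row n c _ HcG (bernstein_gram_symmetric a b B n) (first_row a b B n) (kron 0))
    by (auto; intros; now apply first_row_gram).
  rewrite (sum_eq _ (fun k => c k j * kron k 0)) by (intros; rewrite kron_sym; ring).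
  symmetry. apply (sum_kron (fun k => c k j)). lia.
Qed.

(* f(x) = 2x^2 + (b - a - 2n) x, so that f(i) - f(j) = (i-j)(2i+2j-2n-a+b). *)
Definition diag_coef (n : nat) (a b x : R) : R := 2 * x * x + (- 2 * INR n - a + b) * x.

(* The three-term operator (L v)(i) = A(i) v(i+1) - f(i) v(i) + B(i) v(i-1); the recurrence
   of the theorem says that L acting on the row index of c equals L acting on the column index. *)
Definition three_term (n : nat) (a b : R) (v : nat -> R) (i : nat) : R :=
  Apol n b (INR i) * v (S i) - diag_coef n a b (INR i) * v i + Bpol n a (INR i) * v (i - 1)%nat.

Definition three_term_T (n : nat) (a b : R) (g : nat -> R) (l : nat) : R :=
  Apol n b (INR l - 1) * (match l with O => 0 | S l' => g l' end)
  - diag_coef n a b (INR l) * g l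
  + Bpol n a (INR l + 1) * (if Nat.ltb l n then g (S l) else 0).

(* The boundary values A(n) = 0 and B(0) = 0 that make L respect the index range 0..n. *)
Lemma Apol_n n b : Apol n b (INR n) = 0.
Proof. unfold Apol. ring. Qed.

Lemma Bpol_0 n a : Bpol n a 0 = 0.
Proof. unfold Bpol. ring. Qed.

(* Summation by parts for the upper diagonal; the term v(n+1) is killed by A(n) = 0. *)
Lemma sum_by_parts_upper n b (v g : nat -> R) :
  sum_f_R0 (fun l => Apol n b (INR l) * v (S l) * g l) n
  = sum_f_R0 (fun l => v l * (Apol n b (INR l - 1) * match l with O => 0 | S l' => g l' end)) n.
Proof.
  set (h := fun l => v l * (Apol n b (INR l - 1) * match l with O => 0 | S l' => g l' end)).
  assert (Hlast : h (S n) = 0).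
  { unfold h. rewrite S_INR. replace (INR n + 1 - 1) with (INR n) by ring. rewrite Apol_n. ring. }
  pose proof (sum_f_R0_shift h n) as Shift.
  rewrite (sum_eq _ (fun l => h (S l))).
  - unfold h at 3 in Shift. rewrite Rmult_0_r, Rmult_0_r in Shift. lra.
  - intros l _. unfold h. rewrite S_INR. replace (INR l + 1 - 1) with (INR l) by ring. ring.
Qed.

(* Summation by parts for the lower diagonal; the term v(-1) is killed by B(0) = 0. *)
Lemma sum_by_parts_lower n a (v g : nat -> R) :
  sum_f_R0 (fun l => Bpol n a (INR l) * v (l - 1)%nat * g l) n
  = sum_f_R0 (fun l => v l * (Bpol n a (INR l + 1) * if Nat.ltb l n then g (S l) else 0)) n.
Proof.
  set (h := fun l => match l with
                     | O => 0
                     | S l' => Bpol n a (INR l) * v l' * (if Nat.ltb l' n then g l else 0)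
                     end).
  assert (Hlast : h (S n) = 0) by (unfold h; rewrite Nat.ltb_irrefl; ring).
  pose proof (sum_f_R0_shift h n) as Shift.
  rewrite (sum_eq _ h).
  - rewrite (sum_eq (fun l => v l * _) (fun l => h (S l))).
    + change (h 0%nat) with 0 in Shift. lra.
    + intros l _. unfold h. rewrite S_INR. ring.
  - intros [|l] Hl; unfold h.
    + rewrite INR_0, Bpol_0. ring.
    + replace (Nat.ltb l n) with true by (symmetry; apply Nat.ltb_lt; lia).
      now rewrite Nat.sub_succ, Nat.sub_0_r.
Qed.

Lemma three_term_transpose n a b (v g : nat -> R) :
  sum_f_R0 (fun l => three_term n a b v l * g l) n
  = sum_f_R0 (fun l => v l * three_term_T n a b g l) n.
Proof.
  unfold three_term, three_term_T.
  rewrite (sum_eq _ (fun l => Apol n b (INR l) * v (S l) * g l - diag_coef n a b (INR l) * v l * g l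
                              + Bpol n a (INR l) * v (l - 1)%nat * g l)) by (intros; ring).
  rewrite (sum_eq (fun l => v l * _) (fun l =>
             v l * (Apol n b (INR l - 1) * match l with O => 0 | S l' => g l' end)
             - diag_coef n a b (INR l) * v l * g l
             + v l * (Bpol n a (INR l + 1) * if Nat.ltb l n then g (S l) else 0))) by (intros; ring).
  rewrite !plus_sum, !minus_sum, sum_by_parts_upper, sum_by_parts_lower. reflexivity.
Qed.

Definition gram_T_factor (a b : R) (n l k : nat) : R :=
  - INR l * (INR l + b) * gram_factor a b n (l + k - 1)
  - diag_coef n a b (INR l) * gram_factor a b n (l + k)
  - (INR n - INR l) * (INR n - INR l + a) * gram_factor a b n (l + k + 1).

Lemma three_term_T_gram a b B n l k : (l <= n)%nat ->
  three_term_T n a b (fun j => bernstein_gram a b B n j k) l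
  = B / poch (a + b + 2) (2 * n) * Binomial.C n l * Binomial.C n k * gram_T_factor a b n l k.
Proof.
  intros Hl. unfold three_term_T, gram_T_factor, bernstein_gram.
  set (K := B / poch (a + b + 2) (2 * n)).
  assert (Lower : Apol n b (INR l - 1) * match l with
                    | O => 0 | S l' => K * Binomial.C n l' * Binomial.C n k * gram_factor a b n (l' + k) end
                  = K * Binomial.C n l * Binomial.C n k
                    * (- INR l * (INR l + b) * gram_factor a b n (l + k - 1))).
  { destruct l as [|l'].
    - simpl INR. ring.
    - rewrite (pascal_step3 n l'), minus_INR, S_INR by lia.
      replace (S l' + k - 1)%nat with (l' + k)%nat by lia.
      unfold Apol. pose proof (pos_INR l'). field. lra. }
  assert (Upper : Bpol n a (INR l + 1) * (if Nat.ltb l n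
                    then K * Binomial.C n (S l) * Binomial.C n k * gram_factor a b n (S l + k) else 0)
                  = K * Binomial.C n l * Binomial.C n k
                    * (- (INR n - INR l) * (INR n - INR l + a) * gram_factor a b n (l + k + 1))).
  { destruct (Nat.ltb_spec l n).
    - rewrite (pascal_step3 n l), minus_INR, S_INR by lia.
      replace (S l + k)%nat with (l + k + 1)%nat by lia.
      unfold Bpol. pose proof (pos_INR l). field. lra.
    - replace l with n by lia. ring. }
  rewrite Lower, Upper. ring.
Qed.

Lemma gram_T_factor_symmetric a b n l k : (l <= n)%nat -> (k <= n)%nat ->
  gram_T_factor a b n l k = gram_T_factor a b n k l.
Proof.
  intros Hl Hk. destruct (Nat.eq_dec l k) as [->|Hne]; [reflexivity|].
  unfold gram_T_factor, gram_factor. rewrite (Nat.add_comm k l).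
  (* With t = l+k-1 and u = 2n-l-k-1 all Pochhammer symbols are (b+1)_t or (a+1)_u times
     linear factors. *)
  set (t := (l + k - 1)%nat). set (u := (2 * n - l - k - 1)%nat).
  assert (Ht : INR t = INR l + INR k - 1).
  { unfold t. rewrite minus_INR, plus_INR by lia. reflexivity. }
  assert (Hu : INR u = 2 * INR n - INR l - INR k - 1).
  { unfold u. rewrite !minus_INR, mult_INR by lia. reflexivity. }
  replace (l + k)%nat with (S t) by lia. replace (S t + 1)%nat with (S (S t)) by lia.
  replace (S t - 1)%nat with t by lia.
  replace (2 * n - t)%nat with (S (S u)) by lia.
  replace (2 * n - S t)%nat with (S u) by lia.
  replace (2 * n - S (S t))%nat with u by lia.
  cbn [poch]. rewrite !S_INR, Ht, Hu. unfold diag_coef. ring.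
Qed.

Lemma three_term_T_gram_symmetric a b B n l k : (l <= n)%nat -> (k <= n)%nat ->
  three_term_T n a b (fun j => bernstein_gram a b B n j k) l
  = three_term_T n a b (fun j => bernstein_gram a b B n j l) k.
Proof.
  intros Hl Hk. rewrite !three_term_T_gram, gram_T_factor_symmetric by auto. ring.
Qed.

Lemma three_term_sum n a b (c G : nat -> nat -> R) i k :
  sum_f_R0 (fun l => three_term n a b (fun i' => c i' l) i * G l k) n
  = three_term n a b (fun i' => sum_f_R0 (fun l => c i' l * G l k) n) i.
Proof.
  unfold three_term. rewrite !scal_sum, <- minus_sum, <- plus_sum.
  apply sum_eq. intros; ring.
Qed.

Lemma three_term_T_plus n a b (g h : nat -> R) k :
  three_term_T n a b (fun j => g j + h j) k = three_term_T n a b g k + three_term_T n a b h k.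
Proof. unfold three_term_T. destruct k, (Nat.ltb _ n); ring. Qed.

Lemma three_term_T_scal n a b r (g : nat -> R) k :
  three_term_T n a b (fun j => r * g j) k = r * three_term_T n a b g k.
Proof. unfold three_term_T. destruct k, (Nat.ltb _ n); ring. Qed.

Lemma three_term_T_sum n a b (r : nat -> R) (G : nat -> nat -> R) m k :
  three_term_T n a b (fun j => sum_f_R0 (fun l => r l * G j l) m) k
  = sum_f_R0 (fun l => r l * three_term_T n a b (fun j => G j l) k) m.
Proof.
  induction m as [|m IH]; simpl.
  - apply three_term_T_scal.
  - now rewrite three_term_T_plus, IH, three_term_T_scal.
Qed.

Ltac kron_simpl :=
  repeat match goal with
  | |- context [kron ?x ?y] => first [rewrite (kron_eq x y) by lia | rewrite (kron_neq x y) by lia]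
  end.

Lemma three_term_kron n a b i k : (i < n)%nat -> (k <= n)%nat ->
  three_term n a b (fun i' => kron i' k) i = three_term_T n a b (kron i) k.
Proof.
  intros Hi Hk. unfold three_term, three_term_T.
  destruct (Nat.eq_dec k (S i)) as [->|NA].
  { cbv beta iota. destruct (Nat.ltb_spec (S i) n); kron_simpl; rewrite ?S_INR; unfold Apol; ring. }
  destruct (Nat.eq_dec k i) as [->|NB].
  { destruct (Nat.ltb_spec i n); [|lia].
    destruct i as [|i']; cbv beta iota; kron_simpl; rewrite ?INR_0; unfold Bpol; ring. }
  destruct (Nat.eq_dec (S k) i) as [<-|NC].
  { destruct (Nat.ltb_spec k n); [|lia].
    destruct k as [|k']; cbv beta iota; kron_simpl; rewrite ?S_INR; unfold Bpol; ring. }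
  destruct (Nat.ltb_spec k n), k as [|k']; try (exfalso; lia); cbv beta iota; kron_simpl; ring.
Qed.

Lemma three_term_ext n a b (v w : nat -> R) i :
  (forall j, (j <= n)%nat -> v j = w j) -> (i < n)%nat -> three_term n a b v i = three_term n a b w i.
Proof. intros E Hi. unfold three_term. rewrite !E by lia. reflexivity. Qed.

Lemma three_term_T_ext n a b (g h : nat -> R) k :
  (forall j, (j <= n)%nat -> g j = h j) -> (k <= n)%nat -> three_term_T n a b g k = three_term_T n a b h k.
Proof.
  intros E Hk. unfold three_term_T. rewrite (E k Hk).
  destruct k as [|k']; [|rewrite (E k') by lia];
    [destruct (Nat.ltb_spec 0 n) | destruct (Nat.ltb_spec (S k') n)]; rewrite ?E by lia; reflexivity.
Qed.

(* The recurrence: L acting on the row index of c equals L acting on the column index.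
   The difference r satisfies r G = 0 (transpose L onto G, use the symmetry of L^T G, and
   c G = I), hence r = 0. *)
Lemma three_term_rows_cols n a b c B i l : (i < n)%nat -> (l <= n)%nat ->
  left_inverse n c (bernstein_gram a b B n) ->
  three_term n a b (fun i' => c i' l) i = three_term n a b (c i) l.
Proof.
  intros Hi Hl HcG. apply Rminus_diag_uniq.
  set (G := bernstein_gram a b B n).
  pose proof (bernstein_gram_symmetric a b B n) as HG.
  set (r := fun l => three_term n a b (fun i' => c i' l) i - three_term n a b (c i) l).
  change (r l = 0).
  rewrite (solve_row n c G HcG HG r (fun _ => 0)); auto.
  { apply sum_eq_R0. intros; ring. }
  intros k Hk. unfold r.
  rewrite (sum_eq _ (fun l => three_term n a b (fun i' => c i' l) i * G l k
                              - three_term n a b (c i) l * G l k)) by (intros; ring).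
  (* (r G)_k = (L (c G)_{.k})(i) - sum_l c_il (L^T G_{.k})(l). *)
  rewrite minus_sum, three_term_sum, three_term_transpose.
  rewrite (sum_eq (fun l => c i l * three_term_T n a b (fun j => G j k) l)
                  (fun l => c i l * three_term_T n a b (fun j => G j l) k))
    by (intros; unfold G; now rewrite three_term_T_gram_symmetric).
  rewrite <- three_term_T_sum.
  (* Now both sides only involve c G = I, i.e. Kronecker deltas. *)
  rewrite (three_term_ext n a b _ (fun i' => kron i' k)); [| intros j Hj; now apply HcG | exact Hi].
  rewrite (three_term_T_ext n a b _ (kron i)); [| | exact Hk].
  - rewrite three_term_kron by auto. ring.
  - intros j Hj. rewrite <- (HcG i j) by lia. apply sum_eq. intros; now rewrite HG.
Qed.

Lemma cext_in n c i j : (i <= n)%nat -> (j <= n)%nat -> cext n c (Z.of_nat i) (Z.of_nat j) = c i j.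
Proof.
  intros Hi Hj. unfold cext.
  replace (Z.leb 0 (Z.of_nat i)) with true by (symmetry; apply Z.leb_le; lia).
  replace (Z.leb (Z.of_nat i) (Z.of_nat n)) with true by (symmetry; apply Z.leb_le; lia).
  replace (Z.leb 0 (Z.of_nat j)) with true by (symmetry; apply Z.leb_le; lia).
  replace (Z.leb (Z.of_nat j) (Z.of_nat n)) with true by (symmetry; apply Z.leb_le; lia).
  simpl. now rewrite !Nat2Z.id.
Qed.

(* The out-of-range entries of the extension by zero always come with a vanishing factor. *)
Lemma cext_col_pred n a c i j : (i <= n)%nat -> (j <= n)%nat ->
  Bpol n a (INR j) * cext n c (Z.of_nat i) (Z.of_nat j - 1) = Bpol n a (INR j) * c i (j - 1)%nat.
Proof.
  intros Hi Hj. destruct j as [|j']; [now rewrite INR_0, !Bpol_0, !Rmult_0_l|].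
  replace (Z.of_nat (S j') - 1)%Z with (Z.of_nat j') by lia.
  now rewrite cext_in, Nat.sub_succ, Nat.sub_0_r by lia.
Qed.

Lemma cext_col_succ n b c i j : (i <= n)%nat -> (j <= n)%nat ->
  Apol n b (INR j) * cext n c (Z.of_nat i) (Z.of_nat j + 1) = Apol n b (INR j) * c i (S j).
Proof.
  intros Hi Hj. destruct (Nat.eq_dec j n) as [->|Hne]; [now rewrite !Apol_n, !Rmult_0_l|].
  replace (Z.of_nat j + 1)%Z with (Z.of_nat (S j)) by lia. now rewrite cext_in by lia.
Qed.

Lemma cext_row_pred n a c i j : (i <= n)%nat -> (j <= n)%nat ->
  Bpol n a (INR i) * cext n c (Z.of_nat i - 1) (Z.of_nat j) = Bpol n a (INR i) * c (i - 1)%nat j.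
Proof.
  intros Hi Hj. destruct i as [|i']; [now rewrite INR_0, !Bpol_0, !Rmult_0_l|].
  replace (Z.of_nat (S i') - 1)%Z with (Z.of_nat i') by lia.
  now rewrite cext_in, Nat.sub_succ, Nat.sub_0_r by lia.
Qed.

Theorem theorem2p2 (n : nat) (alpha beta : R) (c : nat -> nat -> R) (betaAB : R) :
  alpha > -1 -> beta > -1 ->
  is_dual_coeffs n alpha beta c ->
  improper_int01 (fun t => Rpower t alpha * Rpower (1 - t) beta) betaAB ->
  (forall i j : nat, (i < n)%nat -> (j <= n)%nat ->
     c (S i) j =
       / Apol n beta (INR i) *
       ( (INR i - INR j) * (2 * INR i + 2 * INR j - 2 * INR n - alpha + beta) * c i j
         + Bpol n alpha (INR j) * cext n c (Z.of_nat i) (Z.of_nat j - 1)%Z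
         + Apol n beta (INR j) * cext n c (Z.of_nat i) (Z.of_nat j + 1)%Z
         - Bpol n alpha (INR i) * cext n c (Z.of_nat i - 1)%Z (Z.of_nat j) ))
  /\
  (forall j : nat, (j <= n)%nat ->
     c 0%nat j =
       poch (alpha + beta + 1 + 1) n * poch (beta + 2) n / (INR (fact n) * betaAB)
       * ((-1) ^ j / (poch (alpha + 1) (n - j) * poch (beta + 2) j))).
Proof.
  intros Ha Hb Hdual Hbeta.
  pose proof (dual_coeffs_left_inverse n alpha beta c betaAB Ha Hb Hdual
                (beta_zeroth_moment alpha beta betaAB Hbeta)) as HcG.
  split.
  - intros i j Hi Hj.
    pose proof (three_term_rows_cols n alpha beta c betaAB i j Hi Hj HcG) as Hrec.
    unfold three_term, diag_coef in Hrec.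
    assert (HA : Apol n beta (INR i) <> 0).
    { pose proof (lt_INR i n Hi). pose proof (pos_INR i). unfold Apol.
      apply Rmult_integral_contrapositive_currified; lra. }
    rewrite cext_col_pred, cext_col_succ, cext_row_pred by lia.
    apply (Rmult_eq_reg_l (Apol n beta (INR i))); [|exact HA].
    rewrite <- Rmult_assoc, Rinv_r, Rmult_1_l by exact HA. lra.
  - apply first_row_correct; auto. exact (left_inverse_gram_scale n alpha beta c betaAB HcG).
Qed.
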